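(* Let $n \ge 1$ and let $X_1,\ldots,X_n$ be independent Rademacher random variables (each $X_i$ takes the values $+1$ and $-1$ with probability $1/2$ each). Then \[ \mathbb{P}\Big(\sum_{i=1}^{n} X_i > \frac{\sqrt{n}}{2}\Big) \ge \frac{3}{32}. \] *)

From HB Require Import structures.
From mathcomp Require Import all_boot all_order all_algebra.
From mathcomp Require Import all_classical all_reals all_analysis.
Set Implicit Arguments. Unset Strict Implicit. Unset Printing Implicit Defensive.
Import Order.TTheory GRing.Theory Num.Theory.
Local Open Scope classical_set_scope.
Local Open Scope ring_scope.

Definition mutually_independent d (T : measurableType d) (R : realType)
    (P : probability T R) (n : nat) (X : 'I_n -> {RV P >-> R}) : Prop :=
  forall (J : {set 'I_n}) (B : 'I_n -> set R),
    (forall i, measurable (B i)) ->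
    P (\bigcap_(i in [set j | j \in J]) (X i @^-1` B i)) =
    (\prod_(i in J) P (X i @^-1` B i))%E.

Definition rademacher d (T : measurableType d) (R : realType)
    (P : probability T R) (Y : {RV P >-> R}) : Prop :=
  P (Y @^-1` [set 1]) = (1 / 2)%:E /\ P (Y @^-1` [set -1]) = (1 / 2)%:E.

From HB Require Import structures.
From mathcomp Require Import all_boot all_order all_algebra.
From mathcomp Require Import all_classical all_reals all_analysis.
From mathcomp Require Import ring lra.
Import Order.TTheory GRing.Theory Num.Theory.
Local Open Scope classical_set_scope.
Local Open Scope ring_scope.
Set Implicit Arguments. Unset Strict Implicit. Unset Printing Implicit Defensive.

(* Encode an outcome of (X_1, ..., X_n) by its sign pattern
   f : 'I_n -> bool; the atom {X = f} has probability 2^-n by independence,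
   so P(S > sqrt n / 2) is at least 2^-n times the number of patterns f with
   sgn f := sum_i (+-1)_{f i} > sqrt n / 2.  That count is bounded by a
   fourth-moment (Paley-Zygmund type) argument over the 2^n patterns:
   - the even moments are sum_f sgn f^2 = n 2^n and
     sum_f sgn f^4 = (3n^2 - 2n) 2^n  (induction on n, peeling one sign);
   - pointwise, with c^2 = N/4:  8 N s^2 <= 2N^2 + s^4 + 16 N^2 [c < |s|];
   - summing and using the symmetry f -> ~~ f to halve the two-sided tail
     gives  #{f | c < sgn f} >= (3n^2 + 2n)/(32 n^2) 2^n >= 3/32 2^n. *)

Section SignPatterns.
Variable R : realFieldType.

Definition sign (b : bool) : R := if b then 1 else -1.
Definition sgn n (f : {ffun 'I_n -> bool}) : R := \sum_(i < n) sign (f i).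

Lemma sign_inj : injective sign.
Proof. by move=> [] [] //=; rewrite /sign => h; exfalso; lra. Qed.

Definition fcons n (b : bool) (g : {ffun 'I_n -> bool}) : {ffun 'I_n.+1 -> bool} :=
  [ffun i => if unlift ord0 i is Some j then g j else b].

Lemma sum_fcons n (F : {ffun 'I_n.+1 -> bool} -> R) :
  \sum_(f : {ffun 'I_n.+1 -> bool}) F f =
  \sum_(b : bool) \sum_(g : {ffun 'I_n -> bool}) F (fcons b g).
Proof.
rewrite pair_big /=.
rewrite (reindex (fun p : bool * {ffun 'I_n -> bool} => fcons p.1 p.2)) //=.
apply: onW_bij.
exists (fun f : {ffun 'I_n.+1 -> bool} => (f ord0, [ffun j => f (lift ord0 j)])).
  move=> [b g] /=; congr pair; first by rewrite ffunE unlift_none.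
  by apply/ffunP => j; rewrite !ffunE liftK.
move=> f; apply/ffunP => i; rewrite !ffunE /=.
by case: unliftP => [j ->|->]; rewrite ?ffunE.
Qed.

Lemma sgn_fcons n b (g : {ffun 'I_n -> bool}) : sgn (fcons b g) = sign b + sgn g.
Proof.
rewrite /sgn big_ord_recl ffunE unlift_none; congr (_ + _).
by apply: eq_bigr => i _; rewrite ffunE liftK.
Qed.

Lemma sum_sgnS n (F : R -> R) :
  \sum_(f : {ffun 'I_n.+1 -> bool}) F (sgn f) =
  \sum_(g : {ffun 'I_n -> bool}) (F (1 + sgn g) + F (-1 + sgn g)).
Proof.
by rewrite sum_fcons big_bool -big_split; apply: eq_bigr => g _; rewrite !sgn_fcons.
Qed.

Lemma sgn_ord0 (f : {ffun 'I_0 -> bool}) : sgn f = 0.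
Proof. by rewrite /sgn big_ord0. Qed.

Lemma card_patterns n : \sum_(f : {ffun 'I_n -> bool}) 1 = 2 ^+ n :> R.
Proof.
by rewrite sumr_const card_ffun card_ord card_bool -natrX.
Qed.

Lemma second_moment n : \sum_(f : {ffun 'I_n -> bool}) sgn f ^+ 2 = n%:R * 2 ^+ n.
Proof.
elim: n => [|n IH]; first by rewrite big1 ?mul0r // => f _; rewrite sgn_ord0 expr0n.
rewrite (sum_sgnS n (fun x => x ^+ 2)).
have -> : \sum_(g : {ffun 'I_n -> bool}) ((1 + sgn g) ^+ 2 + (-1 + sgn g) ^+ 2) =
          \sum_(g : {ffun 'I_n -> bool}) (2 * sgn g ^+ 2 + 2 * 1).
  by apply: eq_bigr => g _; ring.
by rewrite big_split /= -!mulr_sumr IH card_patterns -natr1 [_ ^+ n.+1]exprS; ring.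
Qed.

Lemma fourth_moment n :
  \sum_(f : {ffun 'I_n -> bool}) sgn f ^+ 4 = (3 * n%:R ^+ 2 - 2 * n%:R) * 2 ^+ n.
Proof.
elim: n => [|n IH]; first by rewrite big1 => [|f _]; rewrite ?sgn_ord0 ?expr0n /=; ring.
rewrite (sum_sgnS n (fun x => x ^+ 4)).
have -> : \sum_(g : {ffun 'I_n -> bool}) ((1 + sgn g) ^+ 4 + (-1 + sgn g) ^+ 4) =
          \sum_(g : {ffun 'I_n -> bool}) (2 * sgn g ^+ 4 + 12 * sgn g ^+ 2 + 2 * 1).
  by apply: eq_bigr => g _; ring.
rewrite !big_split /= -!mulr_sumr IH second_moment card_patterns -natr1 [_ ^+ n.+1]exprS; ring.
Qed.

Lemma sum_sgnN n (F : R -> R) :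
  \sum_(f : {ffun 'I_n -> bool}) F (sgn f) = \sum_(f : {ffun 'I_n -> bool}) F (- sgn f).
Proof.
have flipK : involutive (fun f : {ffun 'I_n -> bool} => [ffun i => ~~ f i]).
  by move=> f; apply/ffunP => i; rewrite !ffunE negbK.
rewrite (reindex_inj (inv_inj flipK)) /=; apply: eq_bigr => f _.
congr F; rewrite /sgn -sumrN; apply: eq_bigr => i _; rewrite ffunE /sign.
by case: (f i); rewrite ?opprK.
Qed.

Definition ind (b : bool) : R := if b then 1 else 0.

(* The pointwise inequality behind the fourth-moment method: for c^2 = N/4,
   the moment bound s^4 - 8Ns^2 + 16N^2 >= 0 is used when |s| > c, and
   s^2 <= N/4 otherwise. *)
Lemma tail_indicator (N c s : R) : 0 < N -> 0 <= c -> c ^+ 2 = N / 4 ->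
  8 * N * s ^+ 2 <= 2 * N ^+ 2 + s ^+ 4 + 16 * N ^+ 2 * ind (c < `|s|).
Proof.
move=> N_gt0 c_ge0 cE; have [c_lt_s|s_le_c] := ltP c `|s|; rewrite /ind.
- have : 0 <= (s ^+ 2 - 4 * N) ^+ 2 by exact: sqr_ge0.
  nra.
- have : s ^+ 2 <= c ^+ 2 by rewrite -real_normK ?num_real // lerXn2r ?nnegrE.
  nra.
Qed.

(* By symmetry the two-sided tail count is twice the upper-tail count. *)
Lemma sum_tail_norm n (c : R) : 0 <= c ->
  \sum_(f : {ffun 'I_n -> bool}) ind (c < `|sgn f|) =
  2 * \sum_(f : {ffun 'I_n -> bool} | c < sgn f) 1.
Proof.
move=> c_ge0; have tail_split (s : R) : ind (c < `|s|) = ind (c < s) + ind (c < - s).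
  rewrite /ind ltr_normr.
  by have [cs|sc] := ltrP c s; have [cns|nsc] := ltrP c (- s); rewrite /=; lra.
under eq_bigr do rewrite tail_split.
rewrite big_split /= -(sum_sgnN n (fun s => ind (c < s))) [in RHS]big_mkcond.
by rewrite mulr_natl mulr2n.
Qed.

Lemma count_upper_tail n (c : R) : (0 < n)%N -> 0 <= c -> c ^+ 2 = n%:R / 4 ->
  3 / 32 * 2 ^+ n <= \sum_(f : {ffun 'I_n -> bool} | c < sgn f) (1 : R).
Proof.
move=> n_gt0 c_ge0 cE; set N : R := n%:R.
have N_gt0 : 0 < N by rewrite ltr0n.
have pow_gt0 : 0 < 2 ^+ n :> R by rewrite exprn_gt0.
have summed : \sum_(f : {ffun 'I_n -> bool}) 8 * N * sgn f ^+ 2 <=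
    \sum_(f : {ffun 'I_n -> bool}) (2 * N ^+ 2 * 1 + sgn f ^+ 4 +
       16 * N ^+ 2 * ind (c < `|sgn f|)).
  by apply: ler_sum => f _; rewrite mulr1; exact: tail_indicator.
rewrite -mulr_sumr !big_split /= -!mulr_sumr second_moment fourth_moment in summed.
rewrite card_patterns sum_tail_norm // in summed.
(* summed reads 8N^2 2^n <= (5N^2 - 2N) 2^n + 32 N^2 S, so S >= 3/32 2^n. *)
nra.
Qed.
End SignPatterns.

Section Atoms.
Variables (d : measure_display) (T : measurableType d) (R : realType).
Variables (P : probability T R) (n : nat) (X : 'I_n -> {RV P >-> R}).

Definition atom (f : {ffun 'I_n -> bool}) : set T :=
  \bigcap_(i in [set j | j \in [set: 'I_n]%SET]) (X i @^-1` [set sign R (f i)]).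

Lemma atomP f w : atom f w <-> forall i, X i w = sign R (f i).
Proof.
split=> [Afw i|Xw i _]; last exact: Xw.
by apply: Afw; rewrite /= inE.
Qed.

Lemma measurable_atom f : measurable (atom f).
Proof.
apply: fin_bigcap_measurable; first exact: finite_finset.
by move=> i _; apply: measurable_funPTI; exact: measurable_set1.
Qed.

Lemma atoms_trivIset (D : set {ffun 'I_n -> bool}) : trivIset D atom.
Proof.
move=> f g _ _ [w [/atomP Xf /atomP Xg]]; apply/ffunP => i.
by apply: (@sign_inj R); rewrite -Xf -Xg.
Qed.

Lemma probability_atom f : mutually_independent X -> (forall i, rademacher (X i)) ->
  P (atom f) = ((1 / 2) ^+ n)%:E.
Proof.
move=> indep rad.
rewrite /atom indep => [|i]; last exact: measurable_set1.
rewrite (eq_bigr (fun=> (1 / 2)%:E)) => [|i _].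
  by rewrite prodEFin prodr_const cardsT card_ord.
by have [P1 PN1] := rad i; rewrite /sign; case: (f i).
Qed.

Lemma measure_atoms (p : pred {ffun 'I_n -> bool}) :
  P (\bigcup_(f in [set f | p f]) atom f) = (\sum_(f | p f) P (atom f))%E.
Proof.
rewrite measure_fin_bigcup.
- by rewrite [RHS]bigfs ?index_enum_uniq // => f _; rewrite mem_index_enum.
- exact: finite_finset.
- exact: atoms_trivIset.
- by move=> f _; exact: measurable_atom.
Qed.

Lemma measurable_sum_gt (c : R) : measurable [set w | c < \sum_(i < n) X i w].
Proof.
have := @measurable_sum _ T R setT _ (index_enum 'I_n) (fun i => X i)
  (fun i => measurable_funP (X i)) measurableT `]c, +oo[%classic (measurable_itv _).
rewrite setTI; congr measurable; apply/seteqP; split => w /=;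
  by rewrite in_itv /= andbT.
Qed.

(* On the atom of f the sum X_1 + ... + X_n equals sgn f, so the upper tail
   event contains every atom whose pattern has sgn f > c. *)
Lemma atoms_in_tail (c : R) :
  \bigcup_(f in [set f | c < sgn R f]) atom f `<=` [set w | c < \sum_(i < n) X i w].
Proof.
move=> w [f /= c_lt_f /atomP Xw] /=.
suff -> : \sum_(i < n) X i w = sgn R f by [].
by apply: eq_bigr => i _; rewrite Xw.
Qed.

Lemma tail_ge_count (c : R) : mutually_independent X -> (forall i, rademacher (X i)) ->
  (((\sum_(f : {ffun 'I_n -> bool} | c < sgn R f) 1) * (1 / 2) ^+ n)%:E <=
   P [set w | (c < \sum_(i < n) X i w)%R])%E.
Proof.
move=> indep rad.
have atoms_mem : \bigcup_(f in [set f | c < sgn R f]) atom f \in measurable.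
  by rewrite inE; apply: fin_bigcup_measurable => // f _; exact: measurable_atom.
have tail_mem : [set w | c < \sum_(i < n) X i w] \in measurable.
  by rewrite inE; exact: measurable_sum_gt.
apply: le_trans (le_measure _ atoms_mem tail_mem (@atoms_in_tail c)).
have /= -> := measure_atoms (fun f => c < sgn R f).
rewrite (eq_bigr (fun=> ((1 / 2) ^+ n)%:E)) => [|f _]; last exact: probability_atom.
by rewrite sumEFin mulr_suml; under eq_bigr do rewrite mul1r.
Qed.
End Atoms.

Theorem lemma2 (d : measure_display) (T : measurableType d) (R : realType)
    (P : probability T R) (n : nat) (X : 'I_n -> {RV P >-> R}) :
  (0 < n)%N ->
  mutually_independent X ->
  (forall i, rademacher (X i)) ->
  ((3 / 32)%:E <= P [set w | (Num.sqrt (n%:R : R) / 2 < \sum_(i < n) X i w)%R])%E.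
Proof.
move=> n_gt0 indep rad; set c := Num.sqrt (n%:R : R) / 2.
have c_ge0 : 0 <= c by rewrite divr_ge0 ?sqrtr_ge0.
have cE : c ^+ 2 = n%:R / 4 by rewrite expr_div_n sqr_sqrtr ?ler0n //; lra.
apply: le_trans (tail_ge_count c indep rad); rewrite lee_fin.
have half_pow : 2 ^+ n * (1 / 2 : R) ^+ n = 1 by rewrite -exprMn mul1r mulfV ?expr1n.
have half_pow_ge0 : 0 <= (1 / 2 : R) ^+ n by rewrite exprn_ge0.
apply: le_trans (ler_wpM2r half_pow_ge0 (count_upper_tail n_gt0 c_ge0 cE)).
by rewrite -(mulrA (3 / 32)) half_pow mulr1.
Qed.
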